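(* Let $V$ be a finite nonempty set and $f:\{0,1\}^V\to\{0,1\}^V$. Then $f$ is positive-circular if and only if $f$ is a 2-critical and-net.
   Context: For nonempty $I\subseteq V$ and $z\in\{0,1\}^{V\setminus I}$, the subnetwork of $f$ induced by $z$ is $h:\{0,1\}^I\to\{0,1\}^I$ with $h(x|_I)=f(x)|_I$ for all $x$ whose restriction to $V\setminus I$ is $z$; a strict subnetwork is one different from $f$. $f$ is 2-critical if it has at least two fixed points and every strict subnetwork has at most one fixed point. For $x^{j\alpha}$ the point equal to $x$ except its $j$-component is $\alpha$, the global interaction graph $G(f)$ is the signed digraph on $V$ with a positive (resp. negative) arc from $j$ to $i$ iff $f_i(x^{j1})-f_i(x^{j0})=1$ (resp. $=-1$) for at least one $x$. $f$ is an and-net if $G(f)$ has at most one arc from $j$ to $i$ for all $i,j$ and for every $i$ and $x$: $f_i(x)=1$ iff $G(f)$ has no positive arc $j\to i$ with $x_j=0$ and no negative arc $j\to i$ with $x_j=1$. A cycle is a subgraph with at most one arc between any ordered pair whose underlying unsigned digraph is a directed cycle; positive if it has an even number of negative arcs. $f$ is positive-circular if $G(f)$ itself is a positive cycle through all vertices of $V$. *)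

From mathcomp Require Import all_boot.
Set Implicit Arguments. Unset Strict Implicit. Unset Printing Implicit Defensive.

Section BN.
Variable T : finType.
Notation conf := {ffun T -> bool}.
Implicit Types (f : conf -> conf) (x z : conf) (I : {set T}).

Definition setc x (j : T) (a : bool) : conf := [ffun k => if k == j then a else x k].

Definition pos_arc f (j i : T) : bool :=
  [exists x : conf, f (setc x j true) i && ~~ f (setc x j false) i].
Definition neg_arc f (j i : T) : bool :=
  [exists x : conf, ~~ f (setc x j true) i && f (setc x j false) i].
Definition arc f (j i : T) : bool := pos_arc f j i || neg_arc f j i.

Definition fixpoints f : {set conf} := [set x : conf | f x == x].

(* Fixed points of the subnetwork h : {0,1}^I -> {0,1}^I induced by
   z|_{V \ I}: they are in bijection with the configurations x such that
   x|_{V\I} = z|_{V\I} and f(x)|_I = x|_I. *)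
Definition sub_fixpoints f I z : {set conf} :=
  [set x : conf | [forall j in ~: I, x j == z j] && [forall i in I, f x i == x i]].

(* strict subnetworks are exactly those with I a nonempty proper subset of V *)
Definition two_critical f : Prop :=
  2 <= #|fixpoints f| /\
  forall I z, I != set0 -> I \proper [set: T] -> #|sub_fixpoints f I z| <= 1.

Definition and_net f : Prop :=
  (forall j i, ~~ (pos_arc f j i && neg_arc f j i)) /\
  (forall i x, f x i =
     [forall j, ~~ (pos_arc f j i && ~~ x j) && ~~ (neg_arc f j i && x j)]).

Definition positive_circular f : Prop :=
  (forall j i, ~~ (pos_arc f j i && neg_arc f j i)) /\
  (exists s : T -> T, [/\ injective s, (forall j k, fconnect s j k)
                         & forall j i, arc f j i = (i == s j)]) /\
  ~~ odd #|[set p : T * T | neg_arc f p.1 p.2]|.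

End BN.

From Pilot Require Import Defs.
From mathcomp Require Import all_boot.
Import Defs.
Set Implicit Arguments. Unset Strict Implicit. Unset Printing Implicit Defensive.

(* If G(f) is a positive cycle through V, then f_i is the value of the predecessor of i,
   negated along negative arcs.  A configuration is therefore determined by any one of its
   coordinates through propagation around the cycle, so a strict subnetwork has at most one
   fixed point; and since the number of negations is even, propagation from a vertex closes
   up consistently, giving two complementary fixed points of f.

   Conversely let f be a 2-critical and-net.  Criticality says that no configuration
   differing from a fixed point p exactly on a nonempty proper set D is stable on D; hence
   two fixed points p, q are complementary.  Mixing them (q on S, p elsewhere) is monotone
   for an and-net, so starting from S = {v} one can add vertices one at a time keeping every
   vertex of S but v at its q-value, until S = V \ {l}.  Then v must be unstable, which for
   p_v = 1 (otherwise swap p and q) forces every in-neighbour of v to be l.  So each vertex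
   has exactly one in-neighbour; the in-neighbour map is onto (a vertex without out-arcs
   could be flipped in p without effect) and leaves no nonempty proper set closed, so G(f)
   is a cycle through V, and its negative arcs count the sign changes of p along the
   cycle, an even number. *)

Section BooleanNetworks.
Variable T : finType.
Notation conf := {ffun T -> bool}.
Implicit Types (f : conf -> conf) (x y z : conf) (S : {set T}).

Lemma setcE x j a k : setc x j a k = if k == j then a else x k.
Proof. by rewrite ffunE. Qed.

Lemma setc_id x j a : x j = a -> setc x j a = x.
Proof. by move=> <-; apply/ffunP=> k; rewrite setcE; case: eqP => // ->. Qed.

Lemma setc_noarc f x j i a : ~~ arc f j i -> f (setc x j a) i = f x i.
Proof.
rewrite negb_or !negb_exists => /andP[/forallP/(_ x) not_pos /forallP/(_ x) not_neg].
have same : f (setc x j true) i = f (setc x j false) i.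
  by move: not_pos not_neg; case: (f _ i); case: (f _ i).
by rewrite -{2}(setc_id (erefl (x j))); case: a; case: (x j); rewrite ?same.
Qed.

Lemma arc_dep f i x y : (forall j, arc f j i -> x j = y j) -> f x i = f y i.
Proof.
move=> xy; pose upd (s : seq T) : conf := [ffun k => if k \in s then y k else x k].
have -> : y = upd (enum T) by apply/ffunP => k; rewrite ffunE mem_enum.
elim: (enum T) => [|k s IH]; first by congr (f _ i); apply/ffunP => k; rewrite ffunE.
have -> : upd (k :: s) = setc (upd s) k (y k).
  by apply/ffunP => l; rewrite !ffunE in_cons; case: eqP => [->|].
have [/xy xy_k|/setc_noarc ->] := boolP (arc f k i); last exact: IH.
by rewrite setc_id // ffunE -xy_k; case: ifP.
Qed.

Definition lit f j i (b : bool) := ~~ (pos_arc f j i && ~~ b) && ~~ (neg_arc f j i && b).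

Lemma lit_noarc f j i b : ~~ arc f j i -> lit f j i b.
Proof. by rewrite negb_or /lit => /andP[/negbTE -> /negbTE ->]. Qed.

Lemma lit_arc f j i b : ~~ (pos_arc f j i && neg_arc f j i) -> arc f j i ->
  lit f j i b = b (+) neg_arc f j i.
Proof. by rewrite /lit /arc; case: (pos_arc _ _ _); case: (neg_arc _ _ _); case: b. Qed.

Lemma lit_both f j i b : lit f j i b -> lit f j i (~~ b) -> ~~ arc f j i.
Proof. by rewrite /lit /arc; case: (pos_arc _ _ _); case: (neg_arc _ _ _); case: b. Qed.

Lemma forall_lit_single f i j x : (forall k, arc f k i -> k = j) ->
  [forall k, lit f k i (x k)] = lit f j i (x j).
Proof.
move=> inj; apply/forallP/idP => [|lit_j k]; first exact.
by have [->//|kj] := eqVneq k j; apply: lit_noarc; apply: contra kj => /inj ->.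
Qed.

Lemma single_in_arcE f i j x : ~~ (pos_arc f j i && neg_arc f j i) -> arc f j i ->
  (forall k, arc f k i -> k = j) -> f x i = x j (+) neg_arc f j i.
Proof.
move=> sign arc_j only_j.
have dep y : f x i = f (setc y j (x j)) i.
  by apply: arc_dep => k /only_j ->; rewrite setcE eqxx.
move: sign arc_j; rewrite /arc /pos_arc /neg_arc.
case: existsP => [[y /andP[y1 y0]]|_]; case: existsP => [[y' /andP[y'1 y'0]]|_] //= _ _.
- by rewrite (dep y); case: (x j); [exact: y1 | exact: negbTE y0].
- by rewrite (dep y'); case: (x j); [exact: negbTE y'1 | exact: y'0].
Qed.

Lemma card_neg_arcs f (g : T -> T) : (forall j i, neg_arc f j i -> j = g i) ->
  #|[set a : T * T | neg_arc f a.1 a.2]| = \sum_i neg_arc f (g i) i.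
Proof.
move=> neg_g.
have -> : [set a : T * T | neg_arc f a.1 a.2] = [set (g i, i) | i in [set i | neg_arc f (g i) i]].
  apply/setP=> [[j i]]; rewrite inE /=; apply/idP/imsetP => [neg_ji|[k]].
    by exists i; rewrite ?inE -?(neg_g _ _ neg_ji).
  by rewrite inE => neg_k [-> ->].
rewrite card_imset; last by move=> a b [].
by rewrite -sum1_card big_mkcond /=; apply: eq_bigr => i _; rewrite inE; case: ifP.
Qed.

Lemma sum_orbit (s : T -> T) r (G : T -> nat) : (forall k, fconnect s r k) ->
  \sum_(u < order s r) G (iter u s r) = \sum_k G k.
Proof.
move=> conn_r.
have orbitT : perm_eq (orbit s r) (enum T).
  apply: uniq_perm; [exact: orbit_uniq | exact: enum_uniq |].
  by move=> k; rewrite -fconnect_orbit conn_r mem_enum.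
rewrite -[RHS]big_enum -(perm_big _ orbitT) (big_nth r) size_traject big_mkord.
by apply: eq_bigr => u _; rewrite nth_traject.
Qed.

Lemma even_sum_addb_perm (g : T -> T) (a : T -> bool) : injective g ->
  ~~ odd (\sum_i (a i (+) a (g i))).
Proof.
move=> g_inj.
have E : \sum_i (a i (+) a (g i)) + (\sum_i (a i && a (g i))).*2 = (\sum_i (a i : nat)).*2.
  rewrite -!addnn {2}(reindex_inj g_inj (P := xpredT) (F := fun i => nat_of_bool (a i))).
  rewrite addnA -!big_split /=; apply: eq_bigr => i _.
  by case: (a i); case: (a (g i)).
by move: (congr1 odd E); rewrite oddD !odd_double addbF => ->.
Qed.

Lemma surj_inj (g : T -> T) : (forall m, exists i, g i = m) -> injective g.
Proof.
move=> g_surj; have /image_injP g_inj : #|codom g| == #|T|.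
  by apply/eqP/eq_card => m; have [i <-] := g_surj m; rewrite codom_f.
by move=> a b; apply: g_inj.
Qed.

Section Circular.
Variables (f : conf -> conf) (s : T -> T).
Hypothesis f_sign : forall j i, ~~ (pos_arc f j i && neg_arc f j i).
Hypothesis s_inj : injective s.
Hypothesis s_conn : forall j k, fconnect s j k.
Hypothesis arc_s : forall j i, arc f j i = (i == s j).

Lemma arc_finv j i : arc f j i = (j == finv s i).
Proof. by rewrite arc_s; apply/eqP/eqP => ->; rewrite ?finv_f ?f_finv. Qed.

Lemma circE x i : f x i = x (finv s i) (+) neg_arc f (finv s i) i.
Proof. by apply: single_in_arcE; rewrite ?arc_finv // => k; rewrite arc_finv => /eqP. Qed.

Lemma circ_and_net : and_net f.
Proof.
split=> // i x; rewrite (forall_lit_single (j := finv s i)).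
  by rewrite circE lit_arc // arc_finv.
by move=> k; rewrite arc_finv => /eqP.
Qed.

Lemma circ_sub_fixpoints I z : I != [set: T] -> #|sub_fixpoints f I z| <= 1.
Proof.
move=> I_proper; apply/card_le1_eqP => x y.
rewrite !inE => /andP[/forall_inP x_out /forall_inP x_in].
move=> /andP[/forall_inP y_out /forall_inP y_in].
have [k k_out] : exists k, k \notin I.
  apply/existsP; apply: contraR I_proper => /existsPn k_in.
  by apply/eqP/setP => k; rewrite inE; apply/negbNE.
have xy_iter t : x (iter t s k) = y (iter t s k).
  elim: t => [|t IH] /=; first by rewrite (eqP (x_out k _)) ?(eqP (y_out k _)) ?inE.
  have [st_in|st_out] := boolP (s (iter t s k) \in I); last first.
    by rewrite (eqP (x_out _ _)) ?(eqP (y_out _ _)) ?inE.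
  by rewrite -(eqP (x_in _ st_in)) -(eqP (y_in _ st_in)) !circE finv_f // IH.
by apply/ffunP => i; rewrite -(iter_findex (s_conn k i)).
Qed.

Hypothesis neg_even : ~~ odd #|[set a : T * T | neg_arc f a.1 a.2]|.

(* p_k is the parity of the negative arcs on the s-path from r to k; closing the path
   at k = r is where [neg_even] is needed. *)
Lemma circ_fixpoint (r : T) : exists p, f p = p.
Proof.
pose w i := neg_arc f (finv s i) i.
pose P t := \sum_(u < t) w (iter u.+1 s r).
have P_S t : P t.+1 = P t + w (iter t.+1 s r) by rewrite /P big_ord_recr.
exists [ffun k => odd (P (findex s r k))]; apply/ffunP => i.
rewrite circE !ffunE -/(w i); set j := finv s i.
have i_iter : iter (findex s r j).+1 s r = i by rewrite /= iter_findex ?f_finv.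
have := findex_max (s_conn r j); rewrite leq_eqVlt => /orP[/eqP last_j|lt_j]; last first.
  by rewrite -i_iter findex_iter // P_S oddD oddb.
have r_i : i = r by rewrite -i_iter last_j iter_order.
rewrite [in RHS]r_i findex0 -[in LHS]i_iter -[w _]oddb -oddD -P_S last_j /P big_ord0.
rewrite (sum_orbit (fun k => w (s k)) (s_conn r)).
rewrite -(reindex_inj s_inj (P := xpredT) (F := fun k => nat_of_bool (w k))).
rewrite -(card_neg_arcs (g := finv s)) ?(negbTE neg_even) // => k l neg_kl.
by apply/eqP; rewrite -arc_finv /arc neg_kl orbT.
Qed.

Lemma circ_two_critical (r : T) : two_critical f.
Proof.
split=> [|I z _]; last by rewrite properT; apply: circ_sub_fixpoints.
have [p p_fix] := circ_fixpoint r.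
have notp_fix : f [ffun k => ~~ p k] = [ffun k => ~~ p k].
  apply/ffunP => i; rewrite circE !ffunE -{2}p_fix circE.
  by case: (p _); case: (neg_arc _ _ _).
apply/card_gt1P; exists p, [ffun k => ~~ p k]; rewrite !inE p_fix notp_fix eqxx.
by split=> //; apply/eqP => /ffunP/(_ r); rewrite ffunE; case: (p r).
Qed.

End Circular.

Section Critical.
Variable f : conf -> conf.
Hypothesis f_sign : forall j i, ~~ (pos_arc f j i && neg_arc f j i).
Hypothesis f_and : forall i x, f x i = [forall j, lit f j i (x j)].
Hypothesis f_crit :
  forall I z, I != set0 -> I \proper [set: T] -> #|sub_fixpoints f I z| <= 1.

Lemma crit_unstable p x : f p = p ->
  [set i | x i != p i] != set0 -> [set i | x i != p i] != [set: T] ->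
  exists2 i, x i != p i & f x i != x i.
Proof.
set D := [set i | x i != p i] => p_fix D0 DT.
case: (pickP (fun i => (x i != p i) && (f x i != x i))) => [i /andP[]|x_stable].
  by exists i.
have x_sub : x \in sub_fixpoints f D p.
  rewrite inE; apply/andP; split; apply/forall_inP => j; rewrite !inE ?negbK // => Dj.
  by move: (x_stable j); rewrite Dj => /negbFE.
have p_sub : p \in sub_fixpoints f D p.
  by rewrite inE; apply/andP; split; apply/forall_inP => j _; rewrite ?p_fix eqxx.
have /card_le1_eqP/(_ _ _ x_sub p_sub) x_p : #|sub_fixpoints f D p| <= 1.
  by apply: f_crit; rewrite ?properT.
by case/set0Pn: D0 => i; rewrite inE x_p eqxx.
Qed.

Lemma crit_fixpoints_compl p q : f p = p -> f q = q -> p != q -> forall i, q i = ~~ p i.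
Proof.
move=> p_fix q_fix pq; have D0 : [set i | p i != q i] != set0.
  apply: contraNneq pq => /setP D0; apply/eqP/ffunP => i.
  by move: (D0 i); rewrite !inE => /negbFE/eqP.
have DT : [set i | p i != q i] = [set: T].
  apply/eqP; apply: contraT => DT; have [i _] := crit_unstable q_fix D0 DT.
  by rewrite p_fix eqxx.
by move=> i; have := in_setT i; rewrite -DT inE; case: (q i); case: (p i).
Qed.

Section Complementary.
Variables p q : conf.
Hypotheses (p_fix : f p = p) (q_fix : f q = q) (q_compl : forall i, q i = ~~ p i).

Definition mix S : conf := [ffun i => if i \in S then q i else p i].

Lemma mix_unstable_in S : S != set0 -> S != [set: T] ->
  exists2 i, i \in S & f (mix S) i = p i.
Proof.
have D_S : [set i | mix S i != p i] = S.
  by apply/setP => i; rewrite !inE ffunE q_compl; case: (i \in S); case: (p i).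
move=> S0 ST; have := @crit_unstable p (mix S) p_fix; rewrite D_S => /(_ S0 ST) [i].
rewrite ffunE; case: ifP => [iS _|_]; last by rewrite eqxx.
by rewrite q_compl => f_i; exists i => //; move: f_i; case: (f _ i); case: (p i).
Qed.

Lemma mix_unstable_out S : S != set0 -> S != [set: T] ->
  exists2 i, i \notin S & f (mix S) i = q i.
Proof.
have D_S : [set i | mix S i != q i] = ~: S.
  by apply/setP => i; rewrite !inE ffunE q_compl; case: (i \in S); case: (p i).
move=> S0 ST; have S'0 : ~: S != set0.
  by apply: contraNneq ST => S'0; rewrite -[S]setCK S'0 setC0.
have S'T : ~: S != [set: T].
  by apply: contraNneq S0 => S'T; rewrite -[S]setCK S'T setCT.
have := @crit_unstable q (mix S) q_fix; rewrite D_S => /(_ S'0 S'T) [i].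
rewrite ffunE; case: ifP => [_|iS _]; first by rewrite eqxx.
by move=> f_i; exists i; rewrite ?iS // q_compl; move: f_i; case: (f _ i); case: (p i).
Qed.

Lemma mix_mono S S' i : S \subset S' -> f (mix S) i = q i -> f (mix S') i = q i.
Proof.
move=> /subsetP SS'; have mixS' j : mix S' j = mix S j \/ mix S' j = q j.
  rewrite !ffunE; case: (boolP (j \in S')) => [_|jS']; first by right.
  by left; rewrite (negbTE (contra (SS' j) jS')).
case q_i: (q i) => fi; rewrite f_and in fi; rewrite f_and.
  have /forallP lit_q : [forall j, lit f j i (q j)] by rewrite -f_and q_fix q_i.
  by apply/forallP => j; case: (mixS' j) => ->; [apply: (forallP fi) | apply: lit_q].
have /forallP lit_p : [forall j, lit f j i (p j)].
  by rewrite -f_and p_fix -[p i]negbK -q_compl q_i.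
move/negbT/forallPn: fi => [j not_lit]; apply/negbTE/forallPn; exists j.
have jS : j \in S.
  by apply: contraLR (lit_p j) => jS; rewrite ffunE (negbTE jS) in not_lit.
have mix_j : mix S j = q j by rewrite ffunE jS.
by case: (mixS' j) => ->; rewrite -?mix_j.
Qed.

Variable v : T.

Lemma grow_forced k : 0 < k < #|T| ->
  exists S, [/\ v \in S, #|S| = k & {in S, forall i, i != v -> f (mix S) i = q i}].
Proof.
elim: k => // k IH /andP[_ k_lt]; have [->|k_pos] := posnP k.
  by exists [set v]; rewrite set11 cards1; split=> // i; rewrite inE => ->.
have k_range : 0 < k < #|T| by rewrite k_pos ltnW.
have [S [vS cardS forcedS]] := IH k_range.
have S0 : S != set0 by apply/set0Pn; exists v.
have ST : S != [set: T].
  by apply: contraTneq k_lt => S_T; rewrite -cardS S_T cardsT ltnNge negbK leqnSn.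
have [w wS fw] := mix_unstable_out S0 ST.
exists (w |: S); split; first by rewrite setU1r.
  by rewrite cardsU1 wS cardS.
move=> i; rewrite in_setU1 => /predU1P[-> _|iS iv]; apply: mix_mono (subsetU1 _ _) _.
  exact: fw.
exact: forcedS.
Qed.

Lemma mix_all_but_one_unstable : 1 < #|T| -> exists l, f (mix [set~ l]) v = p v.
Proof.
move=> T_gt1; have k_range : 0 < #|T|.-1 < #|T|.
  by rewrite ltn_predL (ltnW T_gt1) andbT -subn1 subn_gt0.
have [S [vS cardS forcedS]] := grow_forced k_range.
have [l S_l] : exists l, ~: S = [set l].
  apply/cards1P; move: (cardsC S); rewrite cardS -{2}(prednK (ltnW T_gt1)) -addn1.
  by move/addnI ->.
exists l; have -> : [set~ l] = S by rewrite -S_l setCK.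
have S0 : S != set0 by apply/set0Pn; exists v.
have ST : S != [set: T].
  by apply: contraTneq (set11 l) => S_T; rewrite -S_l S_T setCT inE.
have [i iS fi] := mix_unstable_in S0 ST.
have [<-//|iv] := eqVneq i v.
by move: fi; rewrite forcedS // q_compl; case: (p i).
Qed.

Lemma in_arc_le1 : 1 < #|T| -> p v -> exists l, forall j, arc f j v -> j = l.
Proof.
move=> T_gt1 pv; have [l fv] := mix_all_but_one_unstable T_gt1.
exists l => j arc_j; apply/eqP; apply: contraTT arc_j => jl.
move: fv; rewrite pv f_and => /forallP/(_ j); rewrite ffunE !inE jl q_compl => lit_nj.
have := f_and v p; rewrite p_fix pv => /esym/forallP/(_ j) lit_j.
exact: lit_both lit_j lit_nj.
Qed.

End Complementary.

Definition in_nbr v := odflt v [pick j | arc f j v].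

Section InNeighbour.
Variables p q : conf.
Hypotheses (p_fix : f p = p) (q_fix : f q = q) (q_compl : forall i, q i = ~~ p i).

Lemma exists_in_arc v : exists j, arc f j v.
Proof.
case: (pickP (fun j => arc f j v)) => [j|no_arc]; first by exists j.
have : f p v = f q v by apply: arc_dep => j; rewrite no_arc.
by rewrite p_fix q_fix q_compl; case: (p v).
Qed.

Lemma in_nbr_arc v : arc f (in_nbr v) v.
Proof.
rewrite /in_nbr; case: pickP => [j //|no_arc].
by have [j] := exists_in_arc v; rewrite no_arc.
Qed.

Lemma arc_in_nbr j v : arc f j v -> j = in_nbr v.
Proof.
have [T_gt1|T_le1] := ltnP 1 #|T|; last by move=> _; apply: (card_le1_eqP T_le1).
have [l only_l] : exists l, forall j, arc f j v -> j = l.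
  case pv: (p v); first exact: (in_arc_le1 p_fix q_fix q_compl T_gt1 pv).
  apply: (in_arc_le1 q_fix p_fix _ T_gt1); last by rewrite q_compl pv.
  by move=> i; rewrite q_compl negbK.
by move=> /only_l ->; rewrite (only_l _ (in_nbr_arc v)).
Qed.

Lemma in_nbrE x i : f x i = x (in_nbr i) (+) neg_arc f (in_nbr i) i.
Proof. exact: single_in_arcE (in_nbr_arc i) (@arc_in_nbr^~ i). Qed.

Lemma in_nbr_surj m : exists i, in_nbr i = m.
Proof.
have [T_gt1|T_le1] := ltnP 1 #|T|; last by exists m; apply: (card_le1_eqP T_le1).
case: (pickP (fun i => in_nbr i == m)) => [i /eqP|no_out]; first by exists i.
have fp : f (mix p q [set m]) = p.
  by apply/ffunP => i; rewrite in_nbrE -[in RHS]p_fix in_nbrE ffunE inE no_out.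
have m0 : [set m] != set0 by apply/set0Pn; exists m; rewrite set11.
have mT : [set m] != [set: T].
  by apply: contraTneq T_gt1 => m_T; rewrite -cardsT -m_T cards1.
have [i] := mix_unstable_out q_fix q_compl m0 mT.
by rewrite fp q_compl; case: (p i).
Qed.

Lemma in_nbr_inj : injective in_nbr.
Proof. exact: surj_inj in_nbr_surj. Qed.

Lemma in_nbr_closed S : S != set0 -> (forall i, i \in S -> in_nbr i \in S) -> S = [set: T].
Proof.
move=> S0 S_closed; apply/eqP; apply: contraT => ST.
have [i iS] := mix_unstable_in p_fix q_compl S0 ST.
by rewrite in_nbrE ffunE S_closed // -in_nbrE q_fix q_compl; case: (p i).
Qed.

Lemma even_neg_arcs : ~~ odd #|[set a : T * T | neg_arc f a.1 a.2]|.
Proof.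
rewrite (@card_neg_arcs f in_nbr); last first.
  by move=> j i neg_ji; apply: arc_in_nbr; rewrite /arc neg_ji orbT.
have -> : \sum_i neg_arc f (in_nbr i) i = \sum_i (p i (+) p (in_nbr i)).
  by apply: eq_bigr => i _; rewrite -{1}p_fix in_nbrE; case: (p _); case: (neg_arc _ _ _).
exact: even_sum_addb_perm in_nbr_inj.
Qed.

Lemma arc_finv_in_nbr j i : arc f j i = (i == finv in_nbr j).
Proof.
apply/idP/eqP => [/arc_in_nbr ->|->]; first by rewrite finv_f //; exact: in_nbr_inj.
by rewrite -{1}[j](f_finv in_nbr_inj); apply: in_nbr_arc.
Qed.

Lemma fconnect_finv_in_nbr j k : fconnect (finv in_nbr) j k.
Proof.
set S := [set i | fconnect (finv in_nbr) i k].
have S0 : S != set0 by apply/set0Pn; exists k; rewrite inE connect0.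
suff /setP/(_ j) : S = [set: T] by rewrite !inE.
apply: in_nbr_closed S0 _ => i; rewrite !inE; apply: connect_trans.
by rewrite -{2}[i](finv_f in_nbr_inj) fconnect1.
Qed.

End InNeighbour.
End Critical.

Lemma circular_two_critical_and_net f :
  0 < #|T| -> positive_circular f -> two_critical f /\ and_net f.
Proof.
move=> /card_gt0P[r _] [sign [[s [s_inj s_conn arc_s]] neg_even]]; split.
  exact: circ_two_critical sign s_inj s_conn arc_s neg_even r.
exact: circ_and_net sign s_inj arc_s.
Qed.

Lemma two_critical_and_net_circular f : two_critical f -> and_net f -> positive_circular f.
Proof.
move=> [/card_gt1P[p [q [p_fix q_fix pq]]] crit] [sign f_and].
move: p_fix q_fix; rewrite !inE => /eqP p_fix /eqP q_fix.
have q_compl := crit_fixpoints_compl crit p_fix q_fix pq.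
split=> //; split; last exact: (even_neg_arcs sign f_and crit p_fix q_fix q_compl).
exists (finv (in_nbr f)); split.
- exact: finv_inj (in_nbr_inj sign f_and crit p_fix q_fix q_compl).
- exact: (fconnect_finv_in_nbr sign f_and crit p_fix q_fix q_compl).
- exact: (arc_finv_in_nbr sign f_and crit p_fix q_fix q_compl).
Qed.

End BooleanNetworks.

Theorem theorem11 (T : finType) (HV : 0 < #|T|)
    (f : {ffun T -> bool} -> {ffun T -> bool}) :
  positive_circular f <-> (two_critical f /\ and_net f).
Proof.
split=> [|[crit and_f]]; first exact: circular_two_critical_and_net.
exact: two_critical_and_net_circular.
Qed.
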